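(* For every computable metric space $X$: $\overline{\mathsf{C}_X'}\equiv_{sW}(\overline{\mathsf{C}_X})'$.
   Context: A problem $f:\subseteq X\rightrightarrows Y$ between represented spaces (sets with surjective partial maps $\delta:\subseteq\mathbb{N}^\mathbb{N}\to X$) is a partial multi-valued map; $F\vdash f$ means $\delta_YF(p)\in f(\delta_X(p))$ whenever $\delta_X(p)\in\mathrm{dom}(f)$; $f\le_{sW}g$ iff there are computable $H,K$ with $HGK\vdash f$ for all $G\vdash g$; $\equiv_{sW}$ the induced equivalence. For a computable metric space $(X,d,\alpha)$ (Cauchy representation; basic balls $B_{\langle n,\langle i,k\rangle\rangle}=B(\alpha(n),\tfrac{i}{k+1})$), $\mathcal{A}_-(X)$ is the set of closed subsets represented by $p\mapsto X\setminus\bigcup_nB_{p(n)}$, and $\mathsf C_X:\subseteq\mathcal A_-(X)\rightrightarrows X$, $A\mapsto A$, defined on nonempty $A$. $\lim:\subseteq\mathbb{N}^\mathbb{N}\to\mathbb{N}^\mathbb{N}$ maps $\langle p_0,p_1,\dots\rangle$ to $\lim_np_n$; the jump $f'$ of $f$ is $f$ with input representation $\delta_X\circ\lim$. For $p\in\mathbb{N}^\mathbb{N}$, $p-1$ is the concatenation of $p(0)-1,p(1)-1,\dots$ with $0-1$ the empty word; the completion of $(X,\delta_X)$ is $\overline X=X\cup\{\bot\}$ with $\delta_{\overline X}(p)=\delta_X(p-1)$ if $p-1$ is an infinite sequence in $\mathrm{dom}(\delta_X)$ and $\bot$ otherwise; the completion $\overline f:\overline X\rightrightarrows\overline Y$ equals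 $f$ on $\mathrm{dom}(f)$ and $\overline Y$ elsewhere. *)

From Stdlib Require Import Reals Lia Arith.
Open Scope R_scope.

Definition baire := nat -> nat.

(* Cantor pairing and its inverse (enumeration along diagonals). *)
Definition cpair (a b : nat) : nat := ((a + b) * (a + b + 1) / 2 + b)%nat.

Fixpoint unpair (n : nat) : nat * nat :=
  match n with
  | O => (0%nat, 0%nat)
  | S n' => match unpair n' with
            | (S x, y) => (x, S y)
            | (O, y) => (S y, 0%nat)
            end
  end.

(* Unary partial recursive functions (Kleene basis, arguments coded by cpair),
   extended with an oracle call. *)
Inductive code : Type :=
| CZero | CSucc | CId | CFst | CSnd | COracle
| CPair (f g : code)
| CComp (f g : code)
| CRec (f g : code)           (* h<a,0> = f a ; h<a,n+1> = g <a,<n,h<a,n>>> *)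
| CMu (f : code).

Inductive eval (p : baire) : code -> nat -> nat -> Prop :=
| ev_zero x : eval p CZero x 0
| ev_succ x : eval p CSucc x (S x)
| ev_id x : eval p CId x x
| ev_fst x : eval p CFst x (fst (unpair x))
| ev_snd x : eval p CSnd x (snd (unpair x))
| ev_oracle x : eval p COracle x (p x)
| ev_pair f g x a b : eval p f x a -> eval p g x b -> eval p (CPair f g) x (cpair a b)
| ev_comp f g x y z : eval p g x y -> eval p f y z -> eval p (CComp f g) x z
| ev_rec0 f g x a z : unpair x = (a, 0%nat) -> eval p f a z -> eval p (CRec f g) x z
| ev_recS f g x a n w z : unpair x = (a, S n) ->
    eval p (CRec f g) (cpair a n) w -> eval p g (cpair a (cpair n w)) z ->
    eval p (CRec f g) x z
| ev_mu f x n : eval p f (cpair x n) 0 ->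
    (forall m, (m < n)%nat -> exists v, eval p f (cpair x m) (S v)) ->
    eval p (CMu f) x n.

Definition computed (e : code) (p q : baire) : Prop :=
  forall n, eval p e n (q n).

Record rspace : Type := RSpace {
  carrier : Type;
  rep : baire -> carrier -> Prop   (* graph of the (partial) representation *)
}.

Record problem : Type := Problem {
  pin : rspace;
  pout : rspace;
  prel : carrier pin -> carrier pout -> Prop
}.

Definition pdom (f : problem) (x : carrier (pin f)) : Prop := exists y, prel f x y.

Definition realizes (F : baire -> baire -> Prop) (f : problem) : Prop :=
  forall p x, rep (pin f) p x -> pdom f x ->
    (exists q, F p q) /\
    (forall q, F p q -> exists y, rep (pout f) q y /\ prel f x y).

Definition functional (G : baire -> baire -> Prop) : Prop :=
  forall p q q', G p q -> G p q' -> forall n, q n = q' n.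

Definition sW_le (f g : problem) : Prop :=
  exists eH eK : code,
    forall G : baire -> baire -> Prop, functional G -> realizes G g ->
      realizes (fun p s => exists q r, computed eK p q /\ G q r /\ computed eH r s) f.

Definition sW_equiv (f g : problem) : Prop := sW_le f g /\ sW_le g f.

(* lim <p_0,p_1,...> = lim_n p_n, where <p_0,p_1,...>(<i,j>) = p_i(j) *)
Definition blim (p q : baire) : Prop :=
  forall j, exists N, forall i, (N <= i)%nat -> p (cpair i j) = q j.

Definition jumpS (X : rspace) : rspace :=
  RSpace (carrier X) (fun p x => exists q, blim p q /\ rep X q x).

Definition jumpP (f : problem) : problem :=
  Problem (jumpS (pin f)) (pout f) (prel f).

Fixpoint cnt (p : baire) (n : nat) : nat :=
  match n with
  | O => 0%nat
  | S n' => (cnt p n' + (if Nat.ltb 0 (p n') then 1 else 0))%nat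
  end.

(* q = p - 1 and p - 1 is an infinite sequence *)
Definition minus1 (p q : baire) : Prop :=
  forall k, exists n, (0 < p n)%nat /\ cnt p n = k /\ q k = (p n - 1)%nat.

Definition complS (X : rspace) : rspace :=
  RSpace (option (carrier X))
    (fun p ox => match ox with
                 | Some x => exists q, minus1 p q /\ rep X q x
                 | None => ~ (exists q x, minus1 p q /\ rep X q x)
                 end).

Definition complP (f : problem) : problem :=
  Problem (complS (pin f)) (complS (pout f))
    (fun ox oy => match ox with
                  | Some x => pdom f x -> exists y, oy = Some y /\ prel f x y
                  | None => True
                  end).

Definition decQ (m : nat) : R :=
  let (a, b) := unpair m in
  let (s, num) := unpair a in
  (if Nat.eqb s 0 then 1 else -1) * INR num / INR (S b).

Record cms : Type := CMS {
  mX : Type;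
  md : mX -> mX -> R;
  malpha : nat -> mX;
  md_zero : forall x y, md x y = 0 <-> x = y;
  md_sym : forall x y, md x y = md y x;
  md_tri : forall x y z, md x z <= md x y + md y z;
  malpha_dense : forall x eps, 0 < eps -> exists n, md x (malpha n) < eps;
  md_computable : exists e : code, forall i j k, exists m,
      eval (fun _ => 0%nat) e (cpair i (cpair j k)) m /\
      Rabs (md (malpha i) (malpha j) - decQ m) <= / 2 ^ k
}.

Definition cauchyS (M : cms) : rspace :=
  RSpace (mX M) (fun p x =>
    (forall i j, (i <= j)%nat -> md M (malpha M (p i)) (malpha M (p j)) <= / 2 ^ i) /\
    (forall i, md M (malpha M (p i)) x <= / 2 ^ i)).

Definition ball (M : cms) (c : nat) (y : mX M) : Prop :=
  let (n, r) := unpair c in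
  let (i, k) := unpair r in
  md M (malpha M n) y < INR i / INR (S k).

Definition closedset (M : cms) (A : mX M -> Prop) : Prop :=
  forall x, (forall eps, 0 < eps -> exists y, A y /\ md M x y < eps) -> A x.

Definition AminusS (M : cms) : rspace :=
  RSpace {A : mX M -> Prop | closedset M A}
    (fun p A => forall x, proj1_sig A x <-> ~ (exists n, ball M (p n) x)).

(* C_X : A |-> A, defined on nonempty A (dom = {A | exists x, x in A}) *)
Definition CX (M : cms) : problem :=
  Problem (AminusS M) (cauchyS M) (fun A x => proj1_sig A x).

From Stdlib Require Import Reals Lia Lra Arith Classical ClassicalEpsilon FunctionalExtensionality.
Open Scope bool_scope.
Open Scope nat_scope.

(* Both problems have the same solutions, so it suffices to translate input names computably
   in each direction.  When the input is [bot] every output is correct, and only convergence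
   of the translated name matters.

   From the jump of the completion to the completion of the jump: given completion names
   [t_i -> s], take in row [i] the approximation to [s - 1] visible in the first [i] entries
   of [t_i]; these rows converge to [s - 1] whenever [s - 1] is infinite.

   Conversely, given [p] with [p - 1 = (q_m)_m -> r], a name of a closed set, list at position
   [<j,m>] the ball [q_m(j)] if this entry of [q_m] persists in all later [q_i], and the empty
   ball otherwise.  An entry of [p - 1] never changes once it has been found, so a
   violation of persistence, once seen, is permanent; hence the stage-wise test converges and
   the list is the limit of a computable sequence.  The balls it lists are exactly those of
   [r], so it names the same closed set. *)

Lemma triangle_succ s : S s * (S s + 1) / 2 = s * (s + 1) / 2 + S s.
Proof.
  replace (S s * (S s + 1)) with (s * (s + 1) + S s * 2) by nia.
  rewrite Nat.div_add; lia.
Qed.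

Lemma cpair_succ_r x y : cpair x (S y) = S (cpair (S x) y).
Proof. unfold cpair. replace (x + S y) with (S x + y) by lia. lia. Qed.

Lemma cpair_succ_0 y : cpair (S y) 0 = S (cpair 0 y).
Proof. unfold cpair. rewrite !Nat.add_0_r, Nat.add_0_l, triangle_succ. lia. Qed.

Lemma unpair_cpair a b : unpair (cpair a b) = (a, b).
Proof.
  remember (cpair a b) as n eqn:E. revert a b E.
  induction n as [|n IH]; intros a b E.
  - assert (b = 0) by (unfold cpair in E; lia). subst b.
    destruct a as [|a]; [reflexivity|]. rewrite cpair_succ_0 in E. discriminate.
  - destruct b as [|b].
    + destruct a as [|a]; [discriminate|]. rewrite cpair_succ_0 in E. injection E as E.
      simpl. rewrite (IH 0 a E). reflexivity.
    + rewrite cpair_succ_r in E. injection E as E. simpl. rewrite (IH (S a) b E). reflexivity.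
Qed.

Arguments cpair : simpl never.

Definition unpair1 n := fst (unpair n).
Definition unpair2 n := snd (unpair n).
Arguments unpair1 : simpl never.
Arguments unpair2 : simpl never.

Lemma unpair1_cpair a b : unpair1 (cpair a b) = a.
Proof. unfold unpair1; rewrite unpair_cpair; reflexivity. Qed.

Lemma unpair2_cpair a b : unpair2 (cpair a b) = b.
Proof. unfold unpair2; rewrite unpair_cpair; reflexivity. Qed.

Lemma cpair_unpair n : cpair (unpair1 n) (unpair2 n) = n.
Proof.
  unfold unpair1, unpair2. induction n as [|n IH]; [reflexivity|].
  simpl. destruct (unpair n) as [[|x] y]; simpl in *.
  - rewrite cpair_succ_0. congruence.
  - rewrite cpair_succ_r. congruence.
Qed.

Fixpoint mufree (e : code) : Prop :=
  match e with
  | CMu _ => False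
  | CPair f g | CComp f g | CRec f g => mufree f /\ mufree g
  | _ => True
  end.

Lemma eval_mufree_det p e x y : eval p e x y -> mufree e -> forall y', eval p e x y' -> y = y'.
Proof.
  induction 1; simpl; intros Hm y' H'; inversion H'; subst; try reflexivity.
  - f_equal; [apply IHeval1|apply IHeval2]; tauto.
  - match goal with Hx : eval _ g _ ?yy |- _ => assert (y = yy) by (apply IHeval1; tauto) end.
    subst. apply IHeval2; tauto.
  - match goal with Hx : unpair _ = _ |- _ => rewrite H in Hx; injection Hx as <- end.
    apply IHeval; tauto.
  - match goal with Hx : unpair _ = _ |- _ => rewrite H in Hx; discriminate end.
  - match goal with Hx : unpair _ = _ |- _ => rewrite H in Hx; discriminate end.
  - match goal with Hx : unpair _ = _ |- _ => rewrite H in Hx; injection Hx as <- <- end.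
    match goal with
    | Hx : eval _ (CRec f g) _ ?ww |- _ => assert (w = ww) by (apply IHeval1; simpl; tauto)
    end.
    subst. apply IHeval2; tauto.
  - contradiction.
Qed.

(* Restricting to mu-free machines makes the computed function total and single-valued,
   which is what a preprocessing map in a strong Weihrauch reduction needs. *)
Definition computable (F : baire -> nat -> nat) : Prop :=
  exists e, mufree e /\ forall p n, eval p e n (F p n).

Definition computable_bool (b : baire -> nat -> bool) : Prop :=
  computable (fun p n => if b p n then 1 else 0).

Lemma computable_ext F G : (forall p n, F p n = G p n) -> computable F -> computable G.
Proof. intros E [e [m H]]. exists e; split; auto. intros; rewrite <- E; auto. Qed.

Lemma computable_id : computable (fun p n => n).
Proof. exists CId; split; [exact I|]. intros; constructor. Qed.

Lemma computable_compose F A : computable F -> computable A -> computable (fun p n => F p (A p n)).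
Proof.
  intros [f [mf Hf]] [a [ma Ha]]. exists (CComp f a); split; [simpl; tauto|].
  intros; econstructor; eauto.
Qed.

Lemma computable_succ A : computable A -> computable (fun p n => S (A p n)).
Proof.
  intros HA. apply (computable_compose (fun p n => S n)); auto.
  exists CSucc; split; [exact I|]; intros; constructor.
Qed.

Lemma computable_const c : computable (fun p n => c).
Proof.
  induction c; [|apply computable_succ; auto].
  exists CZero; split; [exact I|]; intros; constructor.
Qed.

Lemma computable_unpair1 A : computable A -> computable (fun p n => unpair1 (A p n)).
Proof.
  intros HA. apply (computable_compose (fun p n => unpair1 n)); auto.
  exists CFst; split; [exact I|]; intros; constructor.
Qed.

Lemma computable_unpair2 A : computable A -> computable (fun p n => unpair2 (A p n)).
Proof.
  intros HA. apply (computable_compose (fun p n => unpair2 n)); auto.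
  exists CSnd; split; [exact I|]; intros; constructor.
Qed.

Lemma computable_oracle A : computable A -> computable (fun p n => p (A p n)).
Proof.
  intros HA. apply (computable_compose (fun p n => p n)); auto.
  exists COracle; split; [exact I|]; intros; constructor.
Qed.

Lemma computable_cpair A B :
  computable A -> computable B -> computable (fun p n => cpair (A p n) (B p n)).
Proof.
  intros [a [ma Ha]] [b [mb Hb]]. exists (CPair a b); split; [simpl; tauto|].
  intros; constructor; auto.
Qed.

Fixpoint prim_rec (F0 : nat -> nat) (St : nat -> nat -> nat -> nat) (a n : nat) : nat :=
  match n with
  | O => F0 a
  | S n' => St a n' (prim_rec F0 St a n')
  end.

Lemma computable_prim_rec F0 St A N : computable F0 ->
  computable (fun p x => St p (unpair1 x) (unpair1 (unpair2 x)) (unpair2 (unpair2 x))) ->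
  computable A -> computable N ->
  computable (fun p z => prim_rec (F0 p) (St p) (A p z) (N p z)).
Proof.
  intros [f [mf Hf]] [g [mg Hg]] HA HN.
  assert (Hr : computable (fun p x => prim_rec (F0 p) (St p) (unpair1 x) (unpair2 x))).
  { exists (CRec f g); split; [simpl; tauto|]. intros p x.
    rewrite <- (cpair_unpair x) at 1. generalize (unpair1 x) (unpair2 x). intros a n.
    induction n as [|n IH].
    - apply ev_rec0 with (a := a); [apply unpair_cpair| apply Hf].
    - eapply ev_recS; [apply unpair_cpair| exact IH|].
      pose proof (Hg p (cpair a (cpair n (prim_rec (F0 p) (St p) a n)))) as H.
      rewrite !unpair1_cpair, !unpair2_cpair, !unpair1_cpair in H. exact H. }
  eapply computable_ext; [|exact (computable_compose _ _ Hr (computable_cpair _ _ HA HN))].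
  intros; simpl. rewrite unpair1_cpair, unpair2_cpair; reflexivity.
Qed.

Lemma computable_if b A B : computable_bool b -> computable A -> computable B ->
  computable (fun p n => if b p n then A p n else B p n).
Proof.
  intros Hb HA HB.
  eapply computable_ext; [|apply (computable_prim_rec (fun p a => unpair2 a) (fun p a n w => unpair1 a)
     (fun p z => cpair (A p z) (B p z)) (fun p z => if b p z then 1 else 0))].
  - intros p n; simpl; destruct (b p n); simpl; rewrite ?unpair1_cpair, ?unpair2_cpair; reflexivity.
  - apply computable_unpair2, computable_id.
  - apply computable_unpair1, computable_unpair1, computable_id.
  - apply computable_cpair; auto.
  - exact Hb.
Qed.

Lemma computable_add A B : computable A -> computable B -> computable (fun p n => A p n + B p n).
Proof.
  intros HA HB.
  eapply computable_ext; [|apply (computable_prim_rec (fun p a => a) (fun p a n w => S w) A B); auto].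
  - intros p n; simpl. generalize (A p n) (B p n). intros a k. induction k; simpl; lia.
  - apply computable_id.
  - apply computable_succ, computable_unpair2, computable_unpair2, computable_id.
Qed.

Lemma computable_pred A : computable A -> computable (fun p n => pred (A p n)).
Proof.
  intros HA.
  eapply computable_ext;
    [|apply (computable_prim_rec (fun p a => 0) (fun p a n w => n) (fun _ _ => 0) A); auto].
  - intros p n; simpl. generalize (A p n). intros [|k]; reflexivity.
  - apply computable_const.
  - apply computable_unpair1, computable_unpair2, computable_id.
  - apply computable_const.
Qed.

Lemma computable_sub A B : computable A -> computable B -> computable (fun p n => A p n - B p n).
Proof.
  intros HA HB.
  eapply computable_ext; [|apply (computable_prim_rec (fun p a => a) (fun p a n w => pred w) A B); auto].
  - intros p n; simpl. generalize (A p n) (B p n). intros a k. induction k; simpl; lia.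
  - apply computable_id.
  - apply computable_pred, computable_unpair2, computable_unpair2, computable_id.
Qed.

Lemma computable_bool_leb A B :
  computable A -> computable B -> computable_bool (fun p n => A p n <=? B p n).
Proof.
  intros HA HB. apply (computable_ext (fun p n => 1 - (A p n - B p n))).
  - intros p n. destruct (Nat.leb_spec (A p n) (B p n)); lia.
  - apply computable_sub; [apply computable_const|apply computable_sub; auto].
Qed.

Lemma computable_bool_ltb A B :
  computable A -> computable B -> computable_bool (fun p n => A p n <? B p n).
Proof.
  intros HA HB. apply (computable_bool_leb (fun p n => S (A p n))); auto.
  apply computable_succ; auto.
Qed.

Lemma computable_bool_andb a b :
  computable_bool a -> computable_bool b -> computable_bool (fun p n => a p n && b p n).
Proof.
  intros Ha Hb.
  apply (computable_ext (fun p n => if a p n then (if b p n then 1 else 0) else 0)).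
  - intros p n. destruct (a p n); reflexivity.
  - apply computable_if; [exact Ha|exact Hb|apply computable_const].
Qed.

Lemma computable_bool_negb a : computable_bool a -> computable_bool (fun p n => negb (a p n)).
Proof.
  intros Ha. apply (computable_ext (fun p n => 1 - (if a p n then 1 else 0))).
  - intros p n. destruct (a p n); reflexivity.
  - apply computable_sub; [apply computable_const|exact Ha].
Qed.

Lemma computable_bool_implb a b :
  computable_bool a -> computable_bool b -> computable_bool (fun p n => implb (a p n) (b p n)).
Proof.
  intros Ha Hb.
  apply (computable_ext (fun p n => if negb (a p n && negb (b p n)) then 1 else 0)).
  - intros p n. destruct (a p n), (b p n); reflexivity.
  - apply (computable_bool_negb (fun p n => a p n && negb (b p n))).
    apply computable_bool_andb; [|apply computable_bool_negb]; auto.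
Qed.

Lemma computable_bool_eqb A B :
  computable A -> computable B -> computable_bool (fun p n => A p n =? B p n).
Proof.
  intros HA HB.
  apply (computable_ext (fun p n => if (A p n <=? B p n) && (B p n <=? A p n) then 1 else 0)).
  - intros p n. destruct (Nat.eqb_spec (A p n) (B p n)), (Nat.leb_spec (A p n) (B p n)),
      (Nat.leb_spec (B p n) (A p n)); simpl; try reflexivity; lia.
  - apply (computable_bool_andb (fun p n => A p n <=? B p n) (fun p n => B p n <=? A p n));
      apply computable_bool_leb; auto.
Qed.

Ltac computable_step := match goal with
 | |- computable_bool _ =>
     first [apply computable_bool_andb | apply computable_bool_negb | apply computable_bool_implb
           | apply computable_bool_leb | apply computable_bool_ltb | apply computable_bool_eqb]
 | |- computable _ =>
     first [apply computable_id | apply computable_const | apply computable_succ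
           | apply computable_unpair1 | apply computable_unpair2 | apply computable_oracle
           | apply computable_cpair | apply computable_add | apply computable_sub
           | apply computable_if]
 end.

(* [nth_pos_upto h k x] is [h y] for the [y < x] holding the [k]-th positive entry of [h]
   (counting from 0), and 0 if there is none: the finite approximations to [(h - 1)(k) + 1]. *)
Fixpoint nth_pos_upto (h : baire) (k x : nat) : nat :=
  match x with
  | O => 0
  | S x' => if (0 <? h x') && (cnt h x' =? k) then h x' else nth_pos_upto h k x'
  end.

Fixpoint all_below (f : nat -> bool) (n : nat) : bool :=
  match n with
  | O => true
  | S n' => all_below f n' && f n'
  end.

Lemma all_below_spec f n : all_below f n = true <-> forall i, i < n -> f i = true.
Proof.
  induction n as [|n IH]; simpl.
  - split; intros; [lia|reflexivity].
  - rewrite Bool.andb_true_iff, IH. split.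
    + intros [H1 H2] i Hi. destruct (Nat.eq_dec i n); [subst; auto| apply H1; lia].
    + intros H; split; auto.
Qed.

Lemma computable_nth_pos_upto (h : baire -> nat -> nat -> nat) (K X : baire -> nat -> nat) :
  computable (fun p x => h p (unpair1 x) (unpair2 x)) -> computable K -> computable X ->
  computable (fun p z => nth_pos_upto (h p z) (K p z) (X p z)).
Proof.
  intros Hh HK HX.
  (* the recursion carries the pair (cnt, nth_pos_upto) *)
  set (St := fun p a n w => cpair (unpair1 w + (if 0 <? h p a n then 1 else 0))
                 (if (0 <? h p a n) && (unpair1 w =? K p a) then h p a n else unpair2 w)).
  assert (E : forall p a x, prim_rec (fun _ => cpair 0 0) (St p) a x
                = cpair (cnt (h p a) x) (nth_pos_upto (h p a) (K p a) x)).
  { intros p a x; induction x as [|x IH]; [reflexivity|].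
    simpl. rewrite IH. unfold St. rewrite unpair1_cpair, unpair2_cpair. reflexivity. }
  apply (computable_ext (fun p z => unpair2 (prim_rec (fun _ => cpair 0 0) (St p) z (X p z)))).
  { intros p z. rewrite E, unpair2_cpair. reflexivity. }
  apply computable_unpair2, (computable_prim_rec (fun p _ => cpair 0 0) St (fun p z => z) X); auto.
  - apply computable_const.
  - assert (Hh2 : computable (fun p x => h p (unpair1 x) (unpair1 (unpair2 x)))).
    { apply (computable_ext (fun p x => h p (unpair1 (cpair (unpair1 x) (unpair1 (unpair2 x))))
                              (unpair2 (cpair (unpair1 x) (unpair1 (unpair2 x)))))).
      - intros; rewrite unpair1_cpair, unpair2_cpair. reflexivity.
      - apply (computable_compose _ (fun p x => cpair (unpair1 x) (unpair1 (unpair2 x))) Hh).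
        repeat computable_step. }
    assert (HK2 : computable (fun p x => K p (unpair1 x))).
    { apply computable_compose; auto. repeat computable_step. }
    unfold St. repeat (cbv beta; computable_step); auto.
  - apply computable_id.
Qed.

Lemma computable_bool_all_below (f : baire -> nat -> nat -> bool) (X : baire -> nat -> nat) :
  computable_bool (fun p x => f p (unpair1 x) (unpair2 x)) -> computable X ->
  computable_bool (fun p z => all_below (f p z) (X p z)).
Proof.
  intros Hf HX.
  set (St := fun p a i w => if f p a i then w else 0).
  apply (computable_ext (fun p z => prim_rec (fun _ => 1) (St p) z (X p z))).
  { intros p z. generalize (X p z) as n. induction n as [|n IH]; [reflexivity|].
    simpl. rewrite IH. unfold St. destruct (all_below (f p z) n), (f p z n); reflexivity. }
  apply (computable_prim_rec (fun p _ => 1) St (fun p z => z) X); auto.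
  - apply computable_const.
  - assert (Hf2 : computable_bool (fun p x => f p (unpair1 x) (unpair1 (unpair2 x)))).
    { apply (computable_ext (fun p x => if f p (unpair1 (cpair (unpair1 x) (unpair1 (unpair2 x))))
                              (unpair2 (cpair (unpair1 x) (unpair1 (unpair2 x)))) then 1 else 0)).
      - intros; rewrite unpair1_cpair, unpair2_cpair. reflexivity.
      - apply (computable_compose _ (fun p x => cpair (unpair1 x) (unpair1 (unpair2 x))) Hf).
        repeat computable_step. }
    unfold St. repeat (cbv beta; computable_step); auto.
  - apply computable_id.
Qed.

Ltac solve_computable := repeat (cbv beta zeta;
  first [apply computable_nth_pos_upto | apply computable_bool_all_below | computable_step]).

Lemma cnt_mono p n m : n <= m -> cnt p n <= cnt p m.
Proof. induction 1; simpl; lia. Qed.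

Lemma cnt_lt p y y' : y < y' -> 0 < p y -> cnt p y < cnt p y'.
Proof.
  intros H Hp. pose proof (cnt_mono p (S y) y' H) as Hm. simpl in Hm.
  destruct (Nat.ltb_spec 0 (p y)); lia.
Qed.

Lemma cnt_inj p y y' : 0 < p y -> 0 < p y' -> cnt p y = cnt p y' -> y = y'.
Proof.
  intros H1 H2 E. destruct (Nat.lt_trichotomy y y') as [L|[L|L]]; auto.
  - pose proof (cnt_lt p y y' L H1); lia.
  - pose proof (cnt_lt p y' y L H2); lia.
Qed.

Lemma cnt_ext h h' n : (forall y, y < n -> h y = h' y) -> cnt h n = cnt h' n.
Proof.
  induction n as [|n IH]; intros H; simpl; auto.
  rewrite IH by (intros; apply H; lia). rewrite H by lia. reflexivity.
Qed.

Lemma cnt_all_pos p n : (forall n, 0 < p n) -> cnt p n = n.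
Proof.
  intros H. induction n as [|n IH]; simpl; auto. rewrite IH.
  destruct (Nat.ltb_spec 0 (p n)); [lia|]. specialize (H n); lia.
Qed.

Lemma nth_pos_upto_hit h k x y : y < x -> 0 < h y -> cnt h y = k -> nth_pos_upto h k x = h y.
Proof.
  induction x as [|x IH]; intros Hy Hp Hc; [lia|]. simpl.
  destruct (Nat.eq_dec y x) as [->|Ne].
  - rewrite (proj2 (Nat.ltb_lt 0 (h x)) Hp), (proj2 (Nat.eqb_eq _ _) Hc). reflexivity.
  - destruct ((0 <? h x) && (cnt h x =? k)) eqn:E.
    + apply Bool.andb_true_iff in E as [E1 E2]. apply Nat.eqb_eq in E2.
      pose proof (cnt_lt h y x ltac:(lia) Hp). lia.
    + apply IH; auto; lia.
Qed.

Lemma nth_pos_upto_nonzero h k x : nth_pos_upto h k x <> 0 ->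
  exists y, y < x /\ 0 < h y /\ cnt h y = k /\ nth_pos_upto h k x = h y.
Proof.
  induction x as [|x IH]; simpl; intros H; [congruence|].
  destruct ((0 <? h x) && (cnt h x =? k)) eqn:E.
  - apply Bool.andb_true_iff in E as [E1 E2]. apply Nat.eqb_eq in E2. apply Nat.ltb_lt in E1.
    exists x; repeat split; auto.
  - destruct (IH H) as [y [H1 H2]]. exists y; split; [lia|auto].
Qed.

(* The limit of [nth_pos_upto h k]: [(h - 1)(k) + 1] if [h - 1] has a [k]-th entry, else 0. *)
Definition nth_pos (h : baire) (k : nat) : nat :=
  match excluded_middle_informative (exists y, 0 < h y /\ cnt h y = k) with
  | left E => h (proj1_sig (constructive_indefinite_description _ E))
  | right _ => 0
  end.

Lemma nth_pos_eq h k y : 0 < h y -> cnt h y = k -> nth_pos h k = h y.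
Proof.
  intros Hp Hc. unfold nth_pos.
  destruct (excluded_middle_informative _) as [E|E]; [|exfalso; eauto].
  destruct (constructive_indefinite_description _ E) as [y' [Hp' Hc']]; simpl.
  f_equal. apply (cnt_inj h); congruence.
Qed.

Lemma nth_pos_upto_eq_nth_pos h k x : nth_pos_upto h k x <> 0 -> nth_pos_upto h k x = nth_pos h k.
Proof.
  intros H. destruct (nth_pos_upto_nonzero h k x H) as [y [_ [Hp [Hc ->]]]].
  symmetry. apply nth_pos_eq; auto.
Qed.

Lemma nth_pos_upto_eventually h k : exists N, forall x, N <= x -> nth_pos_upto h k x = nth_pos h k.
Proof.
  destruct (classic (exists y, 0 < h y /\ cnt h y = k)) as [[y [Hp Hc]]|Hn].
  - exists (S y). intros x Hx. rewrite (nth_pos_eq h k y) by auto. apply nth_pos_upto_hit; auto; lia.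
  - exists 0. intros x _. unfold nth_pos.
    destruct (excluded_middle_informative _) as [E|_]; [contradiction|].
    destruct (Nat.eq_dec (nth_pos_upto h k x) 0) as [Z|NZ]; auto.
    destruct (nth_pos_upto_nonzero h k x NZ) as [y [_ [Hp [Hc _]]]]. exfalso; eauto.
Qed.

Lemma minus1_nth_pos p q : minus1 p q -> forall k, nth_pos p k = S (q k).
Proof.
  intros H k. destruct (H k) as [y [Hp [Hc Hq]]]. rewrite (nth_pos_eq p k y) by auto. lia.
Qed.

Lemma minus1_all_pos p : (forall n, 0 < p n) -> minus1 p (fun n => p n - 1).
Proof. intros H k. exists k. repeat split; auto. apply cnt_all_pos; auto. Qed.

Lemma blim_prefix t s : blim t s ->
  forall y, exists N, forall i, N <= i -> forall x, x <= y -> t (cpair i x) = s x.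
Proof.
  intros H y. induction y as [|y [N HN]].
  - destruct (H 0) as [N HN]. exists N. intros i Hi x Hx. replace x with 0 by lia. auto.
  - destruct (H (S y)) as [N' HN']. exists (N + N'). intros i Hi x Hx.
    destruct (Nat.eq_dec x (S y)) as [->|]; [apply HN'; lia| apply HN; lia].
Qed.

Definition row (t : baire) (i : nat) : baire := fun y => t (cpair i y).

Definition rowwise_minus1 (t : baire) (n : nat) : nat :=
  S (nth_pos_upto (row t (unpair1 n)) (unpair2 n) (unpair1 n) - 1).

Lemma computable_rowwise_minus1 : computable rowwise_minus1.
Proof. unfold rowwise_minus1, row. solve_computable. Qed.

Lemma blim_rowwise_minus1 t s r :
  blim t s -> minus1 s r -> blim (fun n => rowwise_minus1 t n - 1) r.
Proof.
  intros Hbl Hm j. destruct (Hm j) as [y [Hp [Hc Hr]]].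
  destruct (blim_prefix t s Hbl y) as [N HN].
  exists (N + S y). intros i Hi. unfold rowwise_minus1. rewrite unpair1_cpair, unpair2_cpair.
  assert (Hrow : forall x, x <= y -> row t i x = s x) by (intros; apply HN; lia).
  rewrite (nth_pos_upto_hit _ _ _ y); [| lia | rewrite Hrow by lia; auto | ].
  - rewrite Hrow by lia. lia.
  - rewrite <- Hc. apply cnt_ext. intros z Hz. apply Hrow; lia.
Qed.

(* Read [F = nth_pos p] as the [+1]-shifted limit of a sequence of names [q_0, q_1, ...],
   [F <m,j>] being entry [j] of [q_m]: [stable F j m] says that this entry keeps its value
   in every later name. *)
Definition stable (F : nat -> nat) (j m : nat) : Prop :=
  F (cpair m j) <> 0 /\ forall i, m <= i -> F (cpair i j) <> 0 -> F (cpair i j) = F (cpair m j).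

Definition stable_limit (F : nat -> nat) (n : nat) : nat :=
  S (if excluded_middle_informative (stable F (unpair1 n) (unpair2 n))
     then F (cpair (unpair2 n) (unpair1 n)) - 1 else 0).

(* Stage [i] of [stable_limit (nth_pos p)]: the persistence condition is only checked
   for [i' < i], and entries not found by stage [i] are ignored. *)
Definition stable_upto (p : baire) (i j m : nat) : bool :=
  negb (nth_pos_upto p (cpair m j) i =? 0) &&
  all_below (fun i' => implb ((m <=? i') && negb (nth_pos_upto p (cpair i' j) i =? 0))
                             (nth_pos_upto p (cpair i' j) i =? nth_pos_upto p (cpair m j) i)) i.

Definition stable_approx (p : baire) (n : nat) : nat :=
  let i := unpair1 n in let j := unpair1 (unpair2 n) in let m := unpair2 (unpair2 n) in
  S (if stable_upto p i j m then nth_pos_upto p (cpair m j) i - 1 else 0).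

Lemma computable_stable_approx : computable stable_approx.
Proof. unfold stable_approx, stable_upto. solve_computable. Qed.

Lemma stable_upto_eventually_true p j m : stable (nth_pos p) j m ->
  exists N, forall i, N <= i ->
    stable_upto p i j m = true /\ nth_pos_upto p (cpair m j) i = nth_pos p (cpair m j).
Proof.
  intros [Hnz Hst]. destruct (nth_pos_upto_eventually p (cpair m j)) as [N HN].
  exists N. intros i Hi. split; [|auto]. unfold stable_upto. rewrite HN by auto.
  apply Bool.andb_true_iff; split; [apply Bool.negb_true_iff, Nat.eqb_neq; auto|].
  apply all_below_spec. intros i' _.
  destruct (Nat.leb_spec m i'); [|reflexivity].
  destruct (Nat.eqb_spec (nth_pos_upto p (cpair i' j) i) 0) as [E|E]; [reflexivity|].
  simpl. apply Nat.eqb_eq. rewrite nth_pos_upto_eq_nth_pos by auto.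
  apply Hst; auto. rewrite <- nth_pos_upto_eq_nth_pos with (x := i); auto.
Qed.

Lemma stable_upto_eventually_false p j m : ~ stable (nth_pos p) j m ->
  exists N, forall i, N <= i -> stable_upto p i j m = false.
Proof.
  intros Hns. destruct (Nat.eq_dec (nth_pos p (cpair m j)) 0) as [Z|NZ].
  - exists 0. intros i _. unfold stable_upto.
    destruct (Nat.eqb_spec (nth_pos_upto p (cpair m j) i) 0) as [E|E]; [reflexivity|].
    rewrite nth_pos_upto_eq_nth_pos in E by auto. contradiction.
  - assert (Hw : exists i', m <= i' /\ nth_pos p (cpair i' j) <> 0 /\
                            nth_pos p (cpair i' j) <> nth_pos p (cpair m j)).
    { apply NNPP; intro C; apply Hns; split; auto. intros i' H1 H2.
      apply NNPP; intro H3. eauto. }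
    destruct Hw as [i' [H1 [H2 H3]]].
    destruct (nth_pos_upto_eventually p (cpair m j)) as [N0 HN0].
    destruct (nth_pos_upto_eventually p (cpair i' j)) as [N1 HN1].
    exists (N0 + N1 + S i'). intros i Hi. unfold stable_upto.
    destruct (all_below _ i) eqn:Eb; [|apply Bool.andb_false_r].
    apply (proj1 (all_below_spec _ _)) with i' in Eb; [|lia].
    rewrite HN0, HN1, (proj2 (Nat.leb_le m i') H1) in Eb by lia.
    apply Nat.eqb_neq in H2, H3. rewrite H2, H3 in Eb. discriminate.
Qed.

Lemma stable_approx_cpair p i j m : stable_approx p (cpair i (cpair j m)) =
  S (if stable_upto p i j m then nth_pos_upto p (cpair m j) i - 1 else 0).
Proof. unfold stable_approx. rewrite unpair2_cpair, !unpair1_cpair, unpair2_cpair. reflexivity. Qed.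

Lemma blim_stable_approx p : blim (stable_approx p) (stable_limit (nth_pos p)).
Proof.
  intros n. rewrite <- (cpair_unpair n). set (j := unpair1 n). set (m := unpair2 n).
  unfold stable_limit. rewrite unpair1_cpair, unpair2_cpair.
  destruct (excluded_middle_informative (stable (nth_pos p) j m)) as [Hs|Hs].
  - destruct (stable_upto_eventually_true p j m Hs) as [N HN].
    exists N. intros i Hi. rewrite stable_approx_cpair. destruct (HN i Hi) as [-> ->]. reflexivity.
  - destruct (stable_upto_eventually_false p j m Hs) as [N HN].
    exists N. intros i Hi. rewrite stable_approx_cpair, HN by auto. reflexivity.
Qed.

Lemma md_nonneg (M : cms) x y : (0 <= md M x y)%R.
Proof.
  pose proof (md_tri M x y x) as H. rewrite (proj2 (md_zero M x x) eq_refl), (md_sym M y x) in H.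
  lra.
Qed.

(* Code 0 is the ball of radius [0/1], which is empty. *)
Lemma ball_zero (M : cms) x : ~ ball M 0 x.
Proof.
  unfold ball. cbn. pose proof (md_nonneg M (malpha M 0) x). unfold Rdiv. rewrite Rmult_0_l. lra.
Qed.

(* The stable entries of the names [q_m] are exactly the entries of their limit, so the two
   unions of balls coincide; unstable positions contribute the empty ball 0. *)
Lemma stable_limit_balls (M : cms) q r x : blim q r ->
  (exists n, ball M (stable_limit (fun k => S (q k)) n - 1) x) <-> (exists j, ball M (r j) x).
Proof.
  intros Hbl. unfold stable_limit. split.
  - intros [n Hb]. destruct (excluded_middle_informative _) as [[_ Hst]|_];
      [|exfalso; exact (ball_zero M x Hb)].
    destruct (Hbl (unpair1 n)) as [N HN]. specialize (Hst (unpair2 n + N) ltac:(lia) ltac:(lia)).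
    rewrite HN in Hst by lia. exists (unpair1 n).
    replace (r (unpair1 n)) with (S (S (q (cpair (unpair2 n) (unpair1 n))) - 1) - 1) by lia. exact Hb.
  - intros [j Hb]. destruct (Hbl j) as [N HN]. exists (cpair j N).
    rewrite unpair1_cpair, unpair2_cpair.
    destruct (excluded_middle_informative _) as [_|Hns].
    + replace (S (S (q (cpair N j)) - 1) - 1) with (r j) by (rewrite HN; lia). exact Hb.
    + exfalso. apply Hns. split; [lia|]. intros i Hi _. rewrite !HN; auto.
Qed.

Lemma sW_le_of_computable_translation (X1 X2 Y : rspace) (R1 : carrier X1 -> carrier Y -> Prop)
  (R2 : carrier X2 -> carrier Y -> Prop) (tr : baire -> baire) :
  computable tr ->
  (forall p x, rep X1 p x -> (exists y, R1 x y) ->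
     exists x', rep X2 (tr p) x' /\ (exists y, R2 x' y) /\ forall y, R2 x' y -> R1 x y) ->
  sW_le (Problem X1 Y R1) (Problem X2 Y R2).
Proof.
  intros [e [me He]] H. exists COracle, e. intros G _ HG p x Hx Hd.
  destruct (H p x Hx Hd) as [x' [Hx' [Hd' Himp]]].
  destruct (HG (tr p) x' Hx' Hd') as [[r Hr] Hall]. split.
  - exists r, (tr p), r. split; [intro n; apply He|split; [exact Hr|intro n; constructor]].
  - intros s [q [r' [Hq [Hr' Hs]]]].
    assert (q = tr p) as ->.
    { apply functional_extensionality; intro n. symmetry.
      apply (eval_mufree_det p e n (tr p n)); [apply He|exact me|apply Hq]. }
    assert (s = r') as ->.
    { apply functional_extensionality; intro n. specialize (Hs n). inversion Hs; reflexivity. }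
    destruct (Hall r' Hr') as [y [Hy HR]]. exists y; split; [exact Hy| apply Himp; exact HR].
Qed.

Lemma complS_total X p : exists x, rep (complS X) p x.
Proof.
  destruct (classic (exists q x, minus1 p q /\ rep X q x)) as [[q [x H]]|H].
  - exists (Some x). simpl. eauto.
  - exists None. exact H.
Qed.

Lemma complP_pdom f x : pdom (complP f) x.
Proof.
  destruct x as [a|].
  - destruct (classic (pdom f a)) as [[y Hy]|Hn].
    + exists (Some y). simpl. intros _. eauto.
    + exists None. simpl. intros H; contradiction.
  - exists None. exact I.
Qed.

Lemma complP_jump_le_jump_complP (M : cms) :
  sW_le (complP (jumpP (CX M))) (jumpP (complP (CX M))).
Proof.
  apply (sW_le_of_computable_translation _ _ _ _ _ _ computable_stable_approx).
  intros p x Hx _. destruct x as [A|].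
  - destruct Hx as [q [Hm [r [Hbl Hr]]]]. exists (Some A).
    split; [|split; [exact (complP_pdom (CX M) (Some A))|intros y H; exact H]].
    exists (stable_limit (nth_pos p)). split; [exact (blim_stable_approx p)|].
    exists (fun n => stable_limit (nth_pos p) n - 1).
    split; [apply minus1_all_pos; intros; unfold stable_limit; lia|].
    assert (Hq : nth_pos p = fun k => S (q k))
      by (apply functional_extensionality; exact (minus1_nth_pos p q Hm)).
    intros y. cbv beta. rewrite (Hr y), Hq, (stable_limit_balls M q r y Hbl). reflexivity.
  - destruct (complS_total (AminusS M) (stable_limit (nth_pos p))) as [x' Hx'].
    exists x'. split; [exists (stable_limit (nth_pos p)); split; [apply blim_stable_approx|exact Hx']|].
    split; [exact (complP_pdom (CX M) x')|intros; exact I].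
Qed.

Lemma jump_complP_le_complP_jump (M : cms) :
  sW_le (jumpP (complP (CX M))) (complP (jumpP (CX M))).
Proof.
  apply (sW_le_of_computable_translation _ _ _ _ _ _ computable_rowwise_minus1).
  intros t x [s [Hbl Hs]] _. destruct x as [A|].
  - destruct Hs as [r [Hm Hr]]. exists (Some A).
    split; [|split; [exact (complP_pdom (jumpP (CX M)) (Some A))|intros y H; exact H]].
    exists (fun n => rowwise_minus1 t n - 1).
    split; [apply minus1_all_pos; intros n; unfold rowwise_minus1; lia|].
    exists r. split; [exact (blim_rowwise_minus1 t s r Hbl Hm)|exact Hr].
  - destruct (complS_total (jumpS (AminusS M)) (rowwise_minus1 t)) as [x' Hx'].
    exists x'. split; [exact Hx'|split; [exact (complP_pdom (jumpP (CX M)) x')|intros; exact I]].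
Qed.

Theorem proposition5p4 (M : cms) :
  sW_equiv (complP (jumpP (CX M))) (jumpP (complP (CX M))).
Proof.
  split; [apply complP_jump_le_jump_complP|apply jump_complP_le_complP_jump].
Qed.
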